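(* Let $\mathbb{B}$ be a category with pullbacks. If the class of split epimorphisms in $\mathbb{B}$ is definable as a full notion of structure on the codomain fibration $\operatorname{cod}:\mathbb{B}^\to\to\mathbb{B}$, then every regular epimorphism in $\mathbb{B}$ splits.
   Context: The class of split epimorphisms (morphisms admitting a section) is closed under pullback. For a class $\mathcal{D}$ of objects of the codomain fibration closed under pullback, the inclusion $\chi$ of the full subcategory of $\mathbb{B}^\to$ on $\mathcal{D}$ is a notion of structure; it is definable if the restriction of $\chi$ to the wide subcategories of cartesian morphisms (pullback squares) has a right adjoint; equivalently, for every $f:X\to Y$ there is a largest subobject $m:I\rightarrowtail Y$ such that $h:Z\to Y$ factors through $m$ iff $h^*(f)\in\mathcal{D}$. *)

Set Implicit Arguments.

Record Category : Type := {
  Obj :> Type;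
  Hom : Obj -> Obj -> Type;
  idm : forall a, Hom a a;
  comp : forall a b d, Hom b d -> Hom a b -> Hom a d;
  comp_id_l : forall a b (f : Hom a b), comp (idm b) f = f;
  comp_id_r : forall a b (f : Hom a b), comp f (idm a) = f;
  comp_assoc : forall a b c' d (h : Hom c' d) (g : Hom b c') (f : Hom a b),
      comp h (comp g f) = comp (comp h g) f
}.

Arguments Hom {c} _ _.
Arguments idm {c} _.
Arguments comp {c a b d} _ _.

Section Notions.
Context {C : Category}.

Definition mono {I Y : C} (m : Hom I Y) : Prop :=
  forall (W : C) (u v : Hom W I), comp m u = comp m v -> u = v.

Definition split_epi {X Y : C} (e : Hom X Y) : Prop :=
  exists s : Hom Y X, comp e s = idm Y.

Definition regular_epi {X Y : C} (e : Hom X Y) : Prop :=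
  exists (W : C) (a b : Hom W X),
    comp e a = comp e b /\
    forall (Z : C) (g : Hom X Z), comp g a = comp g b ->
      exists u : Hom Y Z, comp u e = g /\
        forall u' : Hom Y Z, comp u' e = g -> u' = u.

(* (P, p1, p2) is a pullback of the cospan  Z --h--> Y <--f-- X ;
   p1 : P -> Z is the pulled-back map h^*(f). *)
Definition is_pullback {X Y Z P : C} (f : Hom X Y) (h : Hom Z Y)
    (p1 : Hom P Z) (p2 : Hom P X) : Prop :=
  comp h p1 = comp f p2 /\
  forall (Q : C) (q1 : Hom Q Z) (q2 : Hom Q X), comp h q1 = comp f q2 ->
    exists u : Hom Q P, (comp p1 u = q1 /\ comp p2 u = q2) /\
      forall u' : Hom Q P, comp p1 u' = q1 -> comp p2 u' = q2 -> u' = u.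

Definition has_pullbacks : Prop :=
  forall (X Y Z : C) (f : Hom X Y) (h : Hom Z Y),
    exists (P : C) (p1 : Hom P Z) (p2 : Hom P X), is_pullback f h p1 p2.

Definition factors_through {Z Y I : C} (h : Hom Z Y) (m : Hom I Y) : Prop :=
  exists k : Hom Z I, comp m k = h.

(* The class of split epimorphisms is definable (as a full notion of structure
   on the codomain fibration): for every f : X -> Y there is a (largest)
   subobject m : I >-> Y such that any h : Z -> Y factors through m iff the
   pullback h^*(f) is a split epimorphism. *)
Definition split_epi_definable : Prop :=
  forall (X Y : C) (f : Hom X Y),
    exists (I : C) (m : Hom I Y), mono m /\
      forall (Z : C) (h : Hom Z Y),
        factors_through h m <->
        (forall (P : C) (p1 : Hom P Z) (p2 : Hom P X),
            is_pullback f h p1 p2 -> split_epi p1).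

End Notions.


(* Pulling [e] back along itself gives a split epimorphism (the diagonal is a
   section), so [e] factors through the definable subobject [m] of [e]. Since [m]
   is mono and [e] is a regular epimorphism, [m] is then split, so the identity
   factors through [m] too; hence the pullback of [e] along the identity, i.e.
   [e] itself, is split. *)

Section SplitEpiDefinability.
Context {C : Category}.

Lemma regular_epi_cancel {X Y Z : C} (e : Hom X Y) (u v : Hom Y Z) :
  regular_epi e -> comp u e = comp v e -> u = v.
Proof.
  intros [W [a [b [Hab Hcoeq]]]] Huv.
  assert (Hg : comp (comp u e) a = comp (comp u e) b)
    by now rewrite <- !comp_assoc, Hab.
  destruct (Hcoeq Z (comp u e) Hg) as [w [_ Hw]].
  now rewrite (Hw u eq_refl), (Hw v (eq_sym Huv)).
Qed.

Lemma mono_factoring_regular_epi_split {X Y I : C} (e : Hom X Y) (m : Hom I Y) :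
  regular_epi e -> mono m -> factors_through e m -> split_epi m.
Proof.
  intros He Hm [k Hk].
  pose proof He as [W [a [b [Hab Hcoeq]]]].
  assert (Hka : comp k a = comp k b).
  { apply Hm. now rewrite !comp_assoc, Hk. }
  destruct (Hcoeq I k Hka) as [u [Hue _]].
  exists u. apply (regular_epi_cancel e _ _ He).
  now rewrite <- comp_assoc, Hue, Hk, comp_id_l.
Qed.

Lemma pullback_along_self_split {X Y : C} (f : Hom X Y) (P : C) (p1 p2 : Hom P X) :
  is_pullback f f p1 p2 -> split_epi p1.
Proof.
  intros [_ Hup].
  destruct (Hup X (idm X) (idm X) eq_refl) as [d [[Hd _] _]].
  now exists d.
Qed.

Lemma is_pullback_along_id {X Y : C} (f : Hom X Y) :
  is_pullback f (idm Y) f (idm X).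
Proof.
  split.
  - now rewrite comp_id_l, comp_id_r.
  - intros Q q1 q2 Hq. rewrite comp_id_l in Hq.
    exists q2. split.
    + split; [now symmetry | apply comp_id_l].
    + intros u' _ H2. now rewrite comp_id_l in H2.
Qed.

End SplitEpiDefinability.

Theorem mainTheorem14 (B : Category) :
  @has_pullbacks B -> @split_epi_definable B ->
  forall (X Y : B) (e : Hom X Y), regular_epi e -> split_epi e.
Proof.
  intros _ Hdef X Y e He.
  destruct (Hdef X Y e) as [I [m [Hm Hiff]]].
  assert (Hem : factors_through e m).
  { apply (proj2 (Hiff X e)). exact (pullback_along_self_split e). }
  destruct (mono_factoring_regular_epi_split e m He Hm Hem) as [s Hs].
  assert (Hidm : factors_through (idm Y) m) by now exists s.
  exact (proj1 (Hiff Y (idm Y)) Hidm X e (idm X) (is_pullback_along_id e)).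
Qed.
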